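(* Let $d\ge2$, $G$ a $d$-regular graph on $n$ vertices, $F$ regular, $T=F^{-1}(1-1/d)$ (so $F(T)=1-1/d$) and $p=T\cdot(1-1/d)^d$. Then for every price $p'>0$ and every $T'$ with $T'\cdot F(T')^d=p'$ (i.e. $T'\cdot\mathbf{1}\in\mathcal{N}_{p'\cdot\mathbf{1}}$ is a symmetric equilibrium), $$\mathcal{R}(p\cdot\mathbf{1},T\cdot\mathbf{1})\ \ge\ c\cdot\mathcal{R}(p'\cdot\mathbf{1},T'\cdot\mathbf{1})$$ for an absolute constant $c>0$ (one may take $c=1/16$). Here $\mathcal{R}(p'\cdot\mathbf{1},T'\cdot\mathbf{1})=n\,T'(1-F(T'))F(T')^d$.
   Context: Public-goods pricing game: $n$ buyers are the vertices of an undirected graph $G=([n],E)$; $N(i)=\{j:(i,j)\in E\}$ (so $i\notin N(i)$); $G$ is $d$-regular if $|N(i)|=d$ for all $i$. Values i.i.d. with cumulative distribution function $F$, $F(\infty)=1$. An equilibrium for price vector $\mathbf{p}$ is $\mathbf{T}\in[0,\infty]^n$ (buyer $i$ purchases iff $v_i\ge T_i$) with $T_i=p_i/\prod_{j\in N(i)}F(T_j)$ for all $i$; $\mathcal{N}_{\mathbf{p}}$ is the set of equilibria; $\mathcal{R}(\mathbf{p},\mathbf{T})=\sum_ip_i(1-F(T_i))$; $p\cdot\mathbf{1}$ is the uniform price vector. $F$ is regular: atomless, supported on an interval in $[0,\infty)$ with positive density $f$ there, and $\phi(x)=x-\frac{1-F(x)}{f(x)}$ non-decreasing. $F^{-1}(q)=\min\{x:F(x)=q\}$.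 *)

From Stdlib Require Import Reals Lra Lia List.
Import ListNotations.
Open Scope R_scope.

(* A simple undirected graph on vertices 0..n-1, given by neighbour lists:
   nb i is the (duplicate-free) list N(i). *)
Definition is_graph (n : nat) (nb : nat -> list nat) : Prop :=
  forall i, (i < n)%nat ->
    NoDup (nb i) /\ ~ In i (nb i) /\
    (forall j, In j (nb i) -> (j < n)%nat /\ In i (nb j)).

Definition d_regular (n d : nat) (nb : nat -> list nat) : Prop :=
  forall i, (i < n)%nat -> length (nb i) = d.

Definition is_cdf (F : R -> R) : Prop :=
  (forall x y, x <= y -> F x <= F y) /\
  (forall x, 0 <= F x <= 1) /\
  (forall eps, eps > 0 -> exists M, forall x, x < M -> F x < eps) /\
  (forall eps, eps > 0 -> exists M, forall x, x > M -> 1 - F x < eps).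

(* x lies in the (open) support interval (a, b), b = None meaning +oo *)
Definition in_int (a : R) (b : option R) (x : R) : Prop :=
  a < x /\ match b with Some b' => x < b' | None => True end.

(* Regular distribution: atomless (continuous CDF), supported on an interval
   [a,b] (or [a,+oo)) within [0,oo), with positive density f = F' there, and
   virtual value phi(x) = x - (1-F x)/f x non-decreasing on the interval. *)
Definition regular (F : R -> R) : Prop :=
  is_cdf F /\ continuity F /\
  exists (a : R) (b : option R) (f : R -> R),
    0 <= a /\
    (match b with Some b' => a < b' | None => True end) /\
    (forall x, x <= a -> F x = 0) /\
    (match b with Some b' => forall x, b' <= x -> F x = 1 | None => True end) /\
    (forall x, in_int a b x -> derivable_pt_lim F x (f x) /\ f x > 0) /\
    (forall x y, in_int a b x -> in_int a b y -> x <= y ->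
        x - (1 - F x) / f x <= y - (1 - F y) / f y).

Definition is_Finv (F : R -> R) (q x : R) : Prop :=
  F x = q /\ (forall y, F y = q -> x <= y).

Fixpoint prodF (F : R -> R) (T : nat -> R) (l : list nat) : R :=
  match l with [] => 1 | j :: l' => F (T j) * prodF F T l' end.

Definition equilibrium (n : nat) (nb : nat -> list nat) (F : R -> R)
  (p T : nat -> R) : Prop :=
  forall i, (i < n)%nat -> T i = p i / prodF F T (nb i).

Definition revenue (n : nat) (F : R -> R) (p T : nat -> R) : R :=
  fold_right Rplus 0 (map (fun i => p i * (1 - F (T i))) (seq 0 n)).

Definition unif (c : R) : nat -> R := fun _ => c.

(* On a uniform vector both revenues are n times a per-buyer term, namely
   T (1-1/d)^d / d and T' F(T')^d (1 - F(T')), so it suffices to show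
     T' r^d (1-r) <= 2 T / d   (r = F(T'))   and   (1-1/d)^d >= 1/6.
   The first bound splits on the position of T' relative to T:
   - if T' <= T, the elementary inequality d r^d (1-r) <= 1 suffices;
   - if T' > T, regularity of F makes the ratio z (1 - F z) / F z
     non-increasing on the support, so T' (1-r)(1-1/d) <= T r / d.
   The monotonicity of that ratio reduces, by differentiation, to the
   density bound F(z)(1 - F(z)) <= z f(z), which follows from the
   monotonicity of the virtual value phi by a mean-value argument on
   z (1 - F z) - c F z with c = -phi(x). *)

From Pilot Require Import Defs.
From Stdlib Require Import Reals Lra Lia.
Open Scope R_scope.
(* The support predicate of Defs, not the homonymous Stdlib interval test. *)
Local Notation in_int := Defs.in_int.

Lemma bernoulli (x : R) (n : nat) : -1 <= x -> 1 + INR n * x <= (1 + x) ^ n.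
Proof.
  intro hx. induction n as [|n IH]; [simpl; lra|].
  rewrite S_INR. cbn [pow].
  assert (0 <= INR n * (x * x)) by (apply Rmult_le_pos; [apply pos_INR | nra]).
  nra.
Qed.

Lemma exp_pow (x : R) (n : nat) : exp x ^ n = exp (INR n * x).
Proof.
  induction n as [|n IH].
  - simpl. rewrite Rmult_0_l, exp_0. reflexivity.
  - rewrite S_INR. cbn [pow]. rewrite IH, <- exp_plus. f_equal. ring.
Qed.

Lemma inv_nat_le_half (d : nat) : (2 <= d)%nat -> 0 < 1 / INR d <= 1 / 2.
Proof.
  intro hd. assert (HD : 2 <= INR d) by (apply (le_INR 2); lia).
  split; [apply Rdiv_lt_0_compat; lra|].
  apply Rmult_le_reg_l with (INR d); [lra|]. field_simplify; lra.
Qed.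

(* (1-1/d)^d >= 1/6: (1-1/d)^d (1+1/d)^d = (1-1/d^2)^d >= 1/2 by Bernoulli,
   while (1+1/d)^d <= e <= 3. *)
Lemma one_minus_inv_pow_ge (d : nat) : (2 <= d)%nat -> (1 - 1 / INR d) ^ d >= 1 / 6.
Proof.
  intro hd.
  assert (HD : 2 <= INR d) by (apply (le_INR 2); lia).
  assert (hinv := inv_nat_le_half d hd).
  assert (hprod : (1 - 1 / INR d) ^ d * (1 + 1 / INR d) ^ d >= 1 / 2).
  { rewrite <- Rpow_mult_distr.
    replace ((1 - 1 / INR d) * (1 + 1 / INR d)) with (1 + - (1 / INR d * (1 / INR d)))
      by ring.
    assert (hb := bernoulli (- (1 / INR d * (1 / INR d))) d ltac:(nra)).
    replace (INR d * - (1 / INR d * (1 / INR d))) with (- (1 / INR d)) in hb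
      by (field; lra).
    lra. }
  assert (he : (1 + 1 / INR d) ^ d <= 3).
  { apply Rle_trans with (exp (1 / INR d) ^ d).
    - apply pow_incr. split; [lra|].
      left. apply exp_ineq1. lra.
    - rewrite exp_pow. replace (INR d * (1 / INR d)) with 1 by (field; lra).
      apply exp_le_3. }
  assert (0 <= (1 - 1 / INR d) ^ d) by (apply pow_le; lra).
  assert (0 <= (1 + 1 / INR d) ^ d) by (apply pow_le; lra).
  nra.
Qed.

(* d r^d (1-r) <= 1 on [0,1]: Bernoulli applied to 1/r gives r^d (1 + d (1/r - 1)) <= 1. *)
Lemma pow_mul_one_minus_le (d : nat) (r : R) :
  (1 <= d)%nat -> 0 <= r <= 1 -> INR d * (r ^ d * (1 - r)) <= 1.
Proof.
  intros hd hr.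
  destruct (Req_dec r 0) as [->|hr0].
  - destruct d; [lia|]. simpl. lra.
  - set (s := / r).
    assert (hrs : r * s = 1) by (unfold s; field; lra).
    assert (hs : 1 <= s) by (unfold s; rewrite <- Rinv_1; apply Rinv_le_contravar; lra).
    assert (hb := bernoulli (s - 1) d ltac:(lra)).
    replace (1 + (s - 1)) with s in hb by ring.
    assert (hpow : r ^ d * s ^ d = 1) by (rewrite <- Rpow_mult_distr, hrs; apply pow1).
    assert (0 <= r ^ d) by (apply pow_le; lra).
    assert (0 <= INR d) by apply pos_INR.
    assert (1 - r <= s - 1) by nra.
    assert (0 <= r ^ d * INR d * ((s - 1) - (1 - r)))
      by (apply Rmult_le_pos; [apply Rmult_le_pos|]; lra).
    nra.
Qed.

Lemma revenue_unif (n : nat) (F : R -> R) (c t : R) :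
  revenue n F (unif c) (unif t) = INR n * (c * (1 - F t)).
Proof.
  unfold revenue, unif. generalize 0%nat as k.
  induction n as [|n IH]; intro k; simpl; [ring|].
  rewrite IH. destruct n; simpl; ring.
Qed.

Lemma nondecreasing_of_deriv_nonneg (g g' : R -> R) (x y : R) :
  x <= y ->
  (forall z, x <= z <= y -> derivable_pt_lim g z (g' z) /\ 0 <= g' z) ->
  g x <= g y.
Proof.
  intros [hxy| <-] hg; [|lra].
  destruct (MVT_cor2 g g' x y hxy) as [z [hz hzxy]].
  - intros z hz. apply hg, hz.
  - assert (0 <= g' z) by (apply hg; lra). nra.
Qed.

Lemma le_of_right_limit (g : R -> R) (a x : R) :
  a < x -> continuity_pt g a -> (forall y, a < y < x -> g y <= g x) -> g a <= g x.
Proof.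
  intros hax hcont hle.
  destruct (Rle_or_lt (g a) (g x)) as [h|h]; [exact h|exfalso].
  destruct (hcont (g a - g x) ltac:(lra)) as [delta [hdelta hnear]].
  set (y := a + Rmin delta (x - a) / 2).
  assert (0 < Rmin delta (x - a)) by (apply Rmin_pos; lra).
  assert (Rmin delta (x - a) <= delta) by apply Rmin_l.
  assert (Rmin delta (x - a) <= x - a) by apply Rmin_r.
  assert (hy : a < y < x) by (unfold y; lra).
  assert (hdist : R_dist (g y) (g a) < g a - g x).
  { apply hnear. split; [split; [exact I | lra]|].
    simpl. unfold R_dist. rewrite Rabs_right; unfold y; lra. }
  unfold R_dist in hdist. apply Rabs_def2 in hdist.
  specialize (hle y hy). lra.
Qed.

Section RegularDistribution.

Variables (F f : R -> R) (a : R) (b : option R).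
Hypotheses
  (hbnd : forall x, 0 <= F x <= 1)
  (hcont : continuity F)
  (ha : 0 <= a)
  (hlow : forall x, x <= a -> F x = 0)
  (hhigh : match b with Some b' => forall x, b' <= x -> F x = 1 | None => True end)
  (hder : forall x, in_int a b x -> derivable_pt_lim F x (f x) /\ f x > 0)
  (hphi : forall x y, in_int a b x -> in_int a b y -> x <= y ->
            x - (1 - F x) / f x <= y - (1 - F y) / f y).

Lemma in_int_between (x y z : R) :
  in_int a b x -> in_int a b y -> x <= z <= y -> in_int a b z.
Proof. unfold in_int; destruct b; intros [? ?] [? ?] ?; split; lra. Qed.

Lemma left_end_lt_of_F_pos (x : R) : 0 < F x -> a < x.
Proof.
  intro hF0. destruct (Rle_or_lt x a) as [h|h]; [rewrite (hlow x h) in hF0; lra | exact h].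
Qed.

Lemma in_int_of_F_lt_1 (x : R) : a < x -> F x < 1 -> in_int a b x.
Proof.
  intros hax hF1. split; [exact hax|].
  destruct b as [b'|]; [|exact I].
  destruct (Rle_or_lt b' x) as [h|h]; [rewrite (hhigh x h) in hF1; lra | exact h].
Qed.

(* F is positive inside the support (mean value theorem on ((a+x)/2, x)). *)
Lemma F_pos (x : R) : in_int a b x -> 0 < F x.
Proof.
  intro hx. set (m := (a + x) / 2).
  assert (hm : in_int a b m)
    by (destruct hx; apply (in_int_between m x m); unfold in_int in *; destruct b;
        unfold m in *; repeat split; lra).
  assert (hmx : m < x) by (destruct hx; unfold m; lra).
  destruct (MVT_cor2 F f m x hmx) as [c [hc hcmx]].
  { intros c hc. apply hder, (in_int_between m x c); auto. }
  assert (f c > 0) by (apply hder, (in_int_between m x c); auto; lra).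
  assert (0 <= F m) by apply hbnd.
  nra.
Qed.

(* With c = -phi(x), the function
   g z = z (1 - F z) - c F z has derivative f z (phi x - phi z) >= 0 on (a, x],
   so g a = a <= g x = x - F x (1 - F x) / f x. *)
Lemma density_lower_bound (x : R) : in_int a b x -> F x * (1 - F x) <= x * f x.
Proof.
  intro hx. destruct (hder x hx) as [_ hfx].
  set (c := (1 - F x) / f x - x).
  set (g := fun z => z * (1 - F z) - c * F z).
  assert (hga : g a = a) by (unfold g; rewrite (hlow a (Rle_refl a)); ring).
  assert (hgx : g x = x - F x * (1 - F x) / f x) by (unfold g, c; field; lra).
  assert (hcont_g : continuity_pt g a).
  { exact (continuity_pt_minus _ _ a
      (continuity_pt_mult id _ a (derivable_continuous_pt _ _ (derivable_pt_id a))
         (continuity_pt_minus _ F a (continuity_pt_const (fct_cte 1) a (fun _ _ => eq_refl))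
            (hcont a)))
      (continuity_pt_scal F c a (hcont a))). }
  assert (hmono : g a <= g x).
  { apply le_of_right_limit; [destruct hx; lra | exact hcont_g |].
    intros y hy. apply nondecreasing_of_deriv_nonneg
      with (g' := fun z => 1 * (1 - F z) + z * (0 - f z) - c * f z); [lra|].
    intros z hz.
    assert (hzint : in_int a b z)
      by (apply (in_int_between y x z); [unfold in_int in *; destruct b; intuition lra | auto | lra]).
    destruct (hder z hzint) as [hFz hfz]. split.
    - exact (derivable_pt_lim_minus _ _ _ _ _
        (derivable_pt_lim_mult id (fct_cte 1 - F)%F z 1 (0 - f z) (derivable_pt_lim_id z)
           (derivable_pt_lim_minus (fct_cte 1) F z 0 (f z) (derivable_pt_lim_const 1 z) hFz))
        (derivable_pt_lim_scal F c z (f z) hFz)).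
    - assert (hphiz := hphi z x hzint hx ltac:(lra)).
      replace (1 * (1 - F z) + z * (0 - f z) - c * f z)
        with (f z * ((x - (1 - F x) / f x) - (z - (1 - F z) / f z)))
        by (unfold c; field; lra).
      apply Rmult_le_pos; lra. }
  rewrite hga, hgx in hmono.
  assert (hdiv : F x * (1 - F x) / f x <= x) by lra.
  apply Rmult_le_reg_r with (/ f x); [apply Rinv_0_lt_compat; lra|].
  replace (x * f x * / f x) with x by (field; lra). exact hdiv.
Qed.

(* z (1 - F z) / F z is non-increasing on the support: its derivative is
   (F z (1 - F z) - z f z) / F z^2 <= 0.  Stated in cross-multiplied form. *)
Lemma markup_ratio_antitone (x y : R) : in_int a b x -> in_int a b y -> x <= y ->
  y * (1 - F y) * F x <= x * (1 - F x) * F y.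
Proof.
  intros hx hy hxy.
  assert (hFx := F_pos x hx). assert (hFy := F_pos y hy).
  set (u := fun z => z * (1 - F z) / F z).
  assert (hu : - u x <= - u y).
  { apply nondecreasing_of_deriv_nonneg with (g := (- u)%F)
      (g' := fun z => - (((1 * (1 - F z) + z * (0 - f z)) * F z - f z * (z * (1 - F z)))
                         / (F z)²)); [exact hxy|].
    intros z hz.
    assert (hzint : in_int a b z) by (apply (in_int_between x y z); auto).
    assert (hFz := F_pos z hzint).
    destruct (hder z hzint) as [hdz _]. split.
    - apply derivable_pt_lim_opp.
      exact (derivable_pt_lim_div _ F z _ _
        (derivable_pt_lim_mult id (fct_cte 1 - F)%F z 1 (0 - f z) (derivable_pt_lim_id z)
           (derivable_pt_lim_minus (fct_cte 1) F z 0 (f z) (derivable_pt_lim_const 1 z) hdz))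
        hdz ltac:(lra)).
    - assert (hlb := density_lower_bound z hzint).
      replace (((1 * (1 - F z) + z * (0 - f z)) * F z - f z * (z * (1 - F z))) / (F z)²)
        with ((F z * (1 - F z) - z * f z) / (F z)²) by (unfold Rsqr; field; lra).
      assert (0 < / (F z)²) by (apply Rinv_0_lt_compat; unfold Rsqr; nra).
      assert (0 <= (z * f z - F z * (1 - F z)) * / (F z)²)
        by (apply Rmult_le_pos; lra).
      unfold Rdiv. lra. }
  unfold u in hu.
  replace (y * (1 - F y) * F x) with (y * (1 - F y) / F y * (F x * F y)) by (field; lra).
  replace (x * (1 - F x) * F y) with (x * (1 - F x) / F x * (F x * F y)) by (field; lra).
  apply Rmult_le_compat_r; nra.
Qed.

Lemma symmetric_revenue_bound (d : nat) (T T' : R) :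
  (2 <= d)%nat -> F T = 1 - 1 / INR d -> 0 < T' ->
  T' * F T' ^ d * (1 - F T') <= 2 * (T / INR d).
Proof.
  intros hd hFT hT'.
  assert (HD : 2 <= INR d) by (apply (le_INR 2); lia).
  assert (hinv := inv_nat_le_half d hd).
  assert (haT : a < T) by (apply left_end_lt_of_F_pos; lra).
  assert (hT : in_int a b T) by (apply in_int_of_F_lt_1; lra).
  assert (hTpos : 0 < T) by (destruct hT; lra).
  set (r := F T') in *.
  assert (hr := hbnd T'). fold r in hr.
  assert (0 <= r ^ d) by (apply pow_le; lra).
  assert (r ^ d <= 1) by (rewrite <- (pow1 d); apply pow_incr; lra).
  unfold Rdiv. replace (T * / INR d) with (T * (1 / INR d)) by (field; lra).
  destruct (Rle_or_lt T' T) as [hle|hlt].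
  - (* below T the factor r^d (1-r) alone is at most 1/d *)
    assert (hpow := pow_mul_one_minus_le d r ltac:(lia) hr).
    assert (r ^ d * (1 - r) <= 1 / INR d).
    { apply Rmult_le_reg_l with (INR d); [lra|].
      replace (INR d * (1 / INR d)) with 1 by (field; lra). lra. }
    assert (0 <= r ^ d * (1 - r)) by nra.
    nra.
  - (* above T the monotone markup ratio gives T' (1-r) (1-1/d) <= T r / d *)
    destruct (Rle_lt_or_eq_dec r 1 (proj2 hr)) as [hr1|hr1]; [|rewrite hr1; nra].
    assert (hT'int : in_int a b T') by (apply in_int_of_F_lt_1; fold r; lra).
    assert (hratio := markup_ratio_antitone T T' hT hT'int ltac:(lra)).
    fold r in hratio. rewrite hFT in hratio.
    assert (hpos : 0 <= T' * (1 - r)) by nra.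
    assert (0 < T * (1 / INR d)) by (apply Rmult_lt_0_compat; lra).
    assert (hTr : T * (1 - (1 - 1 / INR d)) * r <= T * (1 / INR d))
      by (replace (1 - (1 - 1 / INR d)) with (1 / INR d) by ring; nra).
    assert (T' * (1 - r) * (1 / 2) <= T' * (1 - r) * (1 - 1 / INR d)) by nra.
    nra.
Qed.

End RegularDistribution.

Theorem lemma4p2 (n d : nat) (nb : nat -> list nat) (F : R -> R) (T p : R)
  (hd : (2 <= d)%nat)
  (hG : is_graph n nb) (hreg : d_regular n d nb)
  (hF : regular F)
  (hT : is_Finv F (1 - 1 / INR d) T)
  (hp : p = T * (1 - 1 / INR d) ^ d) :
  forall p' T' : R, p' > 0 -> T' * F T' ^ d = p' ->
    revenue n F (unif p) (unif T) >= 1 / 16 * revenue n F (unif p') (unif T').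
Proof.
  intros p' T' hp' hT'.
  destruct hF as [[_ [hbnd _]] [hcont [a [b [f [ha [_ [hlow [hhigh [hder hphi]]]]]]]]]].
  destruct hT as [hFT _].
  assert (HD : 2 <= INR d) by (apply (le_INR 2); lia).
  assert (hq := one_minus_inv_pow_ge d hd).
  assert (hT'pos : 0 < T').
  { destruct (Rle_or_lt T' 0) as [h|h]; [|exact h].
    assert (0 <= F T' ^ d) by (apply pow_le, hbnd). nra. }
  assert (hbound := symmetric_revenue_bound F f a b hbnd hcont ha hlow hhigh hder hphi
                      d T T' hd hFT hT'pos).
  assert (0 <= T' * F T' ^ d * (1 - F T')).
  { assert (0 <= F T' ^ d) by (apply pow_le, hbnd).
    assert (F T' <= 1) by apply hbnd. apply Rmult_le_pos; nra. }
  assert (hrev : p * (1 - F T) = (1 - 1 / INR d) ^ d * (T / INR d))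
    by (rewrite hp, hFT; field; lra).
  rewrite !revenue_unif, hrev, <- hT'.
  assert (Hn : 0 <= INR n) by apply pos_INR.
  assert (0 <= INR n * (T / INR d)) by (apply Rmult_le_pos; lra).
  apply Rmult_le_compat_l with (r := INR n) in hbound; [|exact Hn].
  nra.
Qed.
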